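(* If a graph $G$ has an $\operatorname{IR}(G)$-set that is not independent and the $\operatorname{IR}$-graph $H=G(\operatorname{IR})$ is connected, then $H$ has an induced $4$-cycle or $\operatorname{diam}(H)\geq 3$.
   Context: All graphs are finite and simple. For $G=(V,E)$, $D\subseteq V$, $v\in D$: $\operatorname{PN}(v,D)=N[v]-N[D-\{v\}]$ (closed neighbourhoods). $D$ is irredundant if $\operatorname{PN}(v,D)\neq\varnothing$ for all $v\in D$; $\operatorname{IR}(G)$ is the maximum size of an irredundant set; an $\operatorname{IR}(G)$-set is an irredundant set of that size. $G(\operatorname{IR})$ has the $\operatorname{IR}(G)$-sets as vertices, with $D\sim D'$ iff there exist $u\in D$, $v\in D'$ with $uv\in E(G)$ and $D'=(D-\{u\})\cup\{v\}$. *)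

(* A finite simple graph G = (T, e): T : finType, e : rel T
   symmetric and irreflexive. *)
From mathcomp Require Import all_boot all_order.
Set Implicit Arguments. Unset Strict Implicit. Unset Printing Implicit Defensive.

Section IRGraph.
Variables (T : finType) (e : rel T).

Definition cnbhd (v : T) : {set T} := [set w | (w == v) || e v w].
Definition cnbhd_set (S : {set T}) : {set T} := \bigcup_(x in S) cnbhd x.
Definition pn (v : T) (D : {set T}) : {set T} := cnbhd v :\: cnbhd_set (D :\ v).

Definition irredundant (D : {set T}) : bool := [forall v in D, pn v D != set0].

Definition IR : nat := \max_(D : {set T} | irredundant D) #|D|.

Definition IR_set (D : {set T}) : bool := irredundant D && (#|D| == IR).

Definition independent (D : {set T}) : bool :=
  [forall u in D, forall v in D, ~~ e u v].

Definition IR_adj : rel {set T} := fun D D' =>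
  [&& IR_set D, IR_set D' &
   [exists u in D, exists v in D', e u v && (D' == (D :\ u) :|: [set v])]].

Definition IR_connected : Prop :=
  forall D D', IR_set D -> IR_set D' -> connect IR_adj D D'.

Definition IR_walk_le (k : nat) (D D' : {set T}) : Prop :=
  exists p : seq {set T}, [/\ size p <= k, path IR_adj D p & last D p = D'].

(* diam(H) >= k : some two vertices of H are at distance >= k,
   i.e. not joined by any walk of length <= k-1 *)
Definition IR_diam_ge (k : nat) : Prop :=
  exists D D', [/\ IR_set D, IR_set D' & ~ IR_walk_le k.-1 D D'].

Definition IR_induced_C4 : Prop :=
  exists a b c d : {set T},
    [/\ uniq [:: a; b; c; d],
        [&& IR_adj a b, IR_adj b c, IR_adj c d & IR_adj d a] &
        ~~ IR_adj a c && ~~ IR_adj b d].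

End IRGraph.

(* Let D be an IR-set containing an edge and N the set of vertices of D with a
   neighbour in D. Every x in N has a private neighbour x' outside D, adjacent to
   x and to no other vertex of D. Trading x for x' for all x in a set S of such
   vertices gives a set D_S of size |D|, which is irredundant when S = N or when
   D_S is independent. A step in G(IR) exchanges a single vertex, so if |N| >= 3 the
   IR-sets D and D_N are at distance at least 3. Otherwise N = {u, v}, the only
   edge of D is uv, and D, D_{u}, D_{u,v}, D_{v} form an induced 4-cycle. *)

From mathcomp Require Import all_boot all_order.
Set Implicit Arguments. Unset Strict Implicit. Unset Printing Implicit Defensive.

Section IRGraph.
Variables (T : finType) (e : rel T).
Hypotheses (esym : symmetric e) (eirr : irreflexive e).
Implicit Types (A B C D S : {set T}) (x y z : T).

Lemma in_cnbhd v w : (w \in cnbhd e v) = (w == v) || e v w.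
Proof. by rewrite inE. Qed.

Lemma pnP v D p :
  reflect (p \in cnbhd e v /\ {in D, forall y, y != v -> p \notin cnbhd e y})
          (p \in pn e v D).
Proof.
rewrite /pn /cnbhd_set in_setD; apply: (iffP andP) => [[npD pv]|[pv npD]]; split => //.
  move=> y yD yv; apply: contra npD => py.
  by apply/bigcupP; exists y => //; rewrite !inE yv.
by apply/negP => /bigcupP[y] /setD1P[yv yD]; apply/negP; exact: npD.
Qed.

Lemma cnbhd_sym x y : (x \in cnbhd e y) = (y \in cnbhd e x).
Proof. by rewrite !in_cnbhd eq_sym esym. Qed.

Lemma independentP D :
  reflect {in D &, forall u v, ~~ e u v} (independent e D).
Proof.
apply: (iffP forall_inP) => [DI u v uD vD | DI u uD].
  by have /forall_inP := DI u uD; apply.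
by apply/forall_inP => v; apply: DI.
Qed.

Lemma independentPn D :
  reflect (exists u v, [/\ u \in D, v \in D & e u v]) (~~ independent e D).
Proof.
apply: (iffP idP) => [|[u [v [uD vD euv]]]].
  by case/forall_inPn=> u uD /forall_inPn[v vD]; rewrite negbK; exists u, v.
by apply/independentP => /(_ u v uD vD); rewrite euv.
Qed.

Lemma independent_irredundant D : independent e D -> irredundant e D.
Proof.
move=> /independentP DI; apply/forall_inP => v vD; apply/set0Pn; exists v.
apply/pnP; split=> [|y yD yv]; first by rewrite in_cnbhd eqxx.
by rewrite in_cnbhd negb_or eq_sym yv DI.
Qed.

Lemma independent_set1 x : independent e [set x].
Proof. by apply/independentP => y z /set1P-> /set1P->; rewrite eirr. Qed.

Lemma IR_adj_exchange A B :
  IR_adj e A B -> exists a b, [/\ a \in A, e a b & B = A :\ a :|: [set b]].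
Proof.
case/and3P=> _ _ /exists_inP[a aA /exists_inP[b _ /andP[eab /eqP ->]]].
by exists a, b.
Qed.

Lemma IR_adj_irr A : ~~ IR_adj e A A.
Proof.
apply/negP => /IR_adj_exchange[a [b [aA eab AE]]].
by move: aA; rewrite {1}AE !inE eqxx /= => /eqP ab; rewrite ab eirr in eab.
Qed.

Lemma IR_adj_sym : symmetric (IR_adj e).
Proof.
suff adj_sym A B : IR_adj e A B -> IR_adj e B A.
  by move=> A B; apply/idP/idP => /adj_sym.
move=> AB; have /and3P[IRA IRB _] := AB.
have [a [b [aA eab BE]]] := IR_adj_exchange AB.
have bA : b \notin A.
  apply/negP => bA; have : #|B| < #|A|.
    rewrite BE (setUidPl _) ?sub1set ?inE ?bA ?andbT; last first.
      by apply/eqP => ba; rewrite ba eirr in eab.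
    by rewrite (cardsD1 a A) aA.
  by case/andP: IRA => _ /eqP ->; case/andP: IRB => _ /eqP ->; rewrite ltnn.
apply/and3P; split=> //; apply/exists_inP; exists b; first by rewrite BE !inE eqxx orbT.
apply/exists_inP; exists a => //; rewrite esym eab /=; apply/eqP/setP => x.
rewrite BE !inE; case: (eqVneq x a) => [->|_]; rewrite ?aA ?orbT //= orbF.
by case: (eqVneq x b) => [->|]; rewrite ?(negbTE bA) ?orbF.
Qed.

Lemma IR_adj_setD_eq A B x y :
  IR_adj e A B -> x \in A :\: B -> y \in A :\: B -> x = y.
Proof.
case/IR_adj_exchange=> a [b [_ _ ->]].
suff diff_a z : z \in A :\: (A :\ a :|: [set b]) -> z = a.
  by move=> /diff_a -> /diff_a ->.
by apply: contraTeq => za; rewrite !inE za /=; case: (z \in A); rewrite ?andbF.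
Qed.

Lemma IR_induced_C4I (a b c d : {set T}) :
  IR_adj e a b -> IR_adj e b c -> IR_adj e c d -> IR_adj e d a ->
  ~~ IR_adj e a c -> ~~ IR_adj e b d -> a != c -> b != d -> IR_induced_C4 e.
Proof.
move=> ab bc cd da nac nbd ac bd; exists a, b, c, d; split; last by rewrite nac.
  have neq A B : IR_adj e A B -> A != B.
    by apply: contraTneq => ->; apply: IR_adj_irr.
  by rewrite /= !inE !negb_or ac bd (neq a b) // (neq b c) // (neq c d) // eq_sym neq.
by rewrite ab bc cd da.
Qed.

Lemma IR_adj_card_setD A B C :
  IR_adj e A B -> #|B :\: C| <= #|A :\: C| + 1.
Proof.
case/IR_adj_exchange=> a [b [_ _ ->]].
have sub : (A :\ a :|: [set b]) :\: C \subset b |: (A :\: C).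
  by apply/subsetP => z; rewrite !inE; case: (z == b); rewrite ?orbT //= orbF => /and3P[->].
by apply: leq_trans (subset_leq_card sub) _; rewrite cardsU1 addnC leq_add2l leq_b1.
Qed.

Lemma IR_walk_le_card_setD k A B :
  IR_walk_le e k A B -> #|B :\: A| <= k.
Proof.
case=> p [sp pp <-]; apply: leq_trans sp.
suff walk C : forall A, path (IR_adj e) A p -> #|last A p :\: C| <= #|A :\: C| + size p.
  by have := walk A A pp; rewrite setDv cards0.
elim: p {pp} => [|A1 p IH] A0 /=; first by rewrite addn0.
case/andP=> A0A1 A1p; apply: leq_trans (IH _ A1p) _.
by rewrite addnS -addn1 addnAC leq_add2r IR_adj_card_setD.
Qed.

Definition nonisolated D : {set T} :=
  [set x in D | [exists y in D, e x y]].

(* The default [x] is never used: [PN(x, D)] is nonempty for [x] in an irredundant [D]. *)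
Definition priv D x : T := odflt x [pick p in pn e x D].

Definition swap D S : {set T} := (D :\: S) :|: priv D @: S.

Section Swap.
Variable D : {set T}.
Hypothesis Dirr : irredundant e D.

Local Notation N := (nonisolated D).

Lemma nonisolated_sub : {subset N <= D}.
Proof. by move=> x; rewrite inE => /andP[]. Qed.

Lemma mem_nonisolated y z : y \in D -> z \in D -> e y z -> y \in N.
Proof. by move=> yD zD eyz; rewrite inE yD; apply/exists_inP; exists z. Qed.

Lemma isolated_nadj y z : y \in D -> y \notin N -> z \in D -> ~~ e y z.
Proof. by move=> yD yN zD; apply: contra yN; apply: mem_nonisolated. Qed.

Lemma priv_pn x : x \in D -> priv D x \in pn e x D.
Proof.
move=> xD; have /set0Pn[p px] := forall_inP Dirr x xD.
by rewrite /priv; case: pickP => [q //|/(_ p)]; rewrite px.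
Qed.

Lemma priv_private x z : x \in D -> z \in D -> z != x -> priv D x \notin cnbhd e z.
Proof. by move=> /priv_pn /pnP[_]; apply. Qed.

Lemma priv_neq x : x \in N -> priv D x != x.
Proof.
rewrite inE => /andP[xD /exists_inP[y yD exy]].
have yx : y != x by apply: contraTneq exy => ->; rewrite eirr.
apply: contraTneq (priv_private xD yD yx) => ->.
by rewrite in_cnbhd esym exy orbT.
Qed.

Lemma priv_adj x : x \in N -> e x (priv D x).
Proof.
move=> xN; have /pnP[] := priv_pn (nonisolated_sub xN).
by rewrite in_cnbhd (negbTE (priv_neq xN)).
Qed.

Lemma priv_notin x : x \in N -> priv D x \notin D.
Proof.
move=> xN; apply/negP => pD; have xD := nonisolated_sub xN.
by have := priv_private xD pD (priv_neq xN); rewrite in_cnbhd eqxx.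
Qed.

Lemma priv_inj : {in N &, injective (priv D)}.
Proof.
move=> x y xN yN pxy; apply/eqP; apply: contraTT (priv_adj xN) => xy.
have [xD yD] := (nonisolated_sub xN, nonisolated_sub yN).
by have := priv_private yD xD xy; rewrite pxy in_cnbhd negb_or => /andP[].
Qed.

Lemma disjoint_priv_imset S : S \subset N -> [disjoint priv D @: S & D].
Proof.
move=> sSN; rewrite -setI_eq0; apply/eqP/setP => y; rewrite !inE.
by apply/andP => -[/imsetP[x /(subsetP sSN) xN ->]]; apply/negP/priv_notin.
Qed.

Lemma mem_swapD S x : x \in D -> x \notin S -> x \in swap D S.
Proof. by move=> xD xS; rewrite !inE xD xS. Qed.

Lemma mem_swap_priv S x : x \in S -> priv D x \in swap D S.
Proof. by move=> xS; rewrite inE imset_f ?orbT. Qed.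

Lemma notin_swap S x : S \subset N -> x \in S -> x \notin swap D S.
Proof.
move=> sSN xS; rewrite inE negb_or inE xS /=.
by rewrite (disjointFl (disjoint_priv_imset sSN)) // nonisolated_sub ?(subsetP sSN).
Qed.

Lemma notin_swap_priv S x :
  S \subset N -> x \in N -> x \notin S -> priv D x \notin swap D S.
Proof.
move=> sSN xN xS; rewrite inE negb_or inE (negbTE (priv_notin xN)) andbF /=.
apply/imsetP => -[y yS /priv_inj eqxy].
by move: xS; rewrite (eqxy xN (subsetP sSN y yS)) yS.
Qed.

Lemma swap_set0 : swap D set0 = D.
Proof. by rewrite /swap setD0 imset0 setU0. Qed.

Lemma swap_setU1 S x :
  S \subset N -> x \in D -> swap D (x |: S) = swap D S :\ x :|: [set priv D x].
Proof.
move=> sSN xD; have xpS : x \notin priv D @: S.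
  by rewrite (disjointFl (disjoint_priv_imset sSN)).
apply/setP => y; rewrite /swap imsetU1 !inE.
case: (eqVneq y x) => [->|yx]; first by rewrite (negbTE xpS) /= orbF.
by rewrite /=; case: (y == priv D x); rewrite ?orbT ?orbF.
Qed.

Lemma swap_setD S : S \subset N -> swap D S :\: D = priv D @: S.
Proof.
move=> sSN; rewrite /swap setDUl (setDidPl (disjoint_priv_imset sSN)).
suff -> : D :\: S :\: D = set0 by rewrite set0U.
by apply/eqP; rewrite setD_eq0 subsetDl.
Qed.

Lemma card_swap_setD S : S \subset N -> #|swap D S :\: D| = #|S|.
Proof.
move=> sSN; rewrite swap_setD // card_in_imset //.
by apply: sub_in2 priv_inj => x; apply: subsetP.
Qed.

Lemma card_swap S : S \subset N -> #|swap D S| = #|D|.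
Proof.
move=> sSN; rewrite -(cardsID D (swap D S)) card_swap_setD //.
have -> : swap D S :&: D = D :\: S.
  rewrite setIUl (setIidPl (subsetDl _ _)).
  by rewrite (disjoint_setI0 (disjoint_priv_imset sSN)) setU0.
have sSD : S \subset D by apply/subsetP => x /(subsetP sSN)/nonisolated_sub.
by rewrite -[in RHS](cardsID S D) (setIidPr sSD) addnC.
Qed.

Lemma independent_setD_nonisolated S : #|N :\: S| <= 1 -> independent e (D :\: S).
Proof.
move=> N1; apply/independentP => y z /setDP[yD yS] /setDP[zD zS]; apply/negP => eyz.
have yN := mem_nonisolated yD zD eyz.
have zN : z \in N by apply: mem_nonisolated zD yD _; rewrite esym.
have /card_le1_eqP/(_ y z) yz := N1.
by move: eyz; rewrite yz ?eirr // inE ?yN ?zN ?yS ?zS.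
Qed.

(* The isolated vertices of [D] stay their own private neighbours, and [x] becomes
   a private neighbour of [priv D x]. *)
Lemma swap_nonisolated_irredundant : irredundant e (swap D N).
Proof.
apply/forall_inP => w /setUP[/setDP[wD wN] | /imsetP[x xN ->]].
  apply/set0Pn; exists w; apply/pnP; split=> [|y]; first by rewrite in_cnbhd eqxx.
  move=> /setUP[/setDP[yD yN] | /imsetP[x xN ->]] yw.
    by rewrite in_cnbhd negb_or eq_sym yw isolated_nadj.
  rewrite cnbhd_sym (priv_private (nonisolated_sub xN) wD) //.
  by apply: contraNneq wN => ->.
apply/set0Pn; exists x; apply/pnP; split=> [|y].
  by rewrite in_cnbhd esym priv_adj ?orbT.
move=> /setUP[/setDP[yD yN] | /imsetP[x' x'N ->]] yx.
  rewrite in_cnbhd negb_or (isolated_nadj yD yN (nonisolated_sub xN)) andbT.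
  by apply: contraNneq yN => <-.
rewrite cnbhd_sym (priv_private (nonisolated_sub x'N) (nonisolated_sub xN)) //.
by apply: contraNneq yx => ->.
Qed.

Lemma swap_independent S :
  S \subset N -> independent e (D :\: S) -> independent e (priv D @: S) ->
  independent e (swap D S).
Proof.
move=> sSN /independentP DSI /independentP pSI; apply/independentP.
have cross y x : y \in D :\: S -> x \in S -> ~~ e y (priv D x).
  move=> /setDP[yD yS] xS; have yx : y != x by apply: contraNneq yS => ->.
  have := priv_private (nonisolated_sub (subsetP sSN x xS)) yD yx.
  by rewrite in_cnbhd negb_or => /andP[].
move=> y z /setUP[yDS|/imsetP[x xS ->]] /setUP[zDS|/imsetP[x' x'S ->]].
- exact: DSI.
- exact: cross.
- by rewrite esym cross.
- by apply: pSI; apply: imset_f.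
Qed.

End Swap.

Lemma IR_set_swap D S :
  IR_set e D -> S \subset nonisolated D -> irredundant e (swap D S) -> IR_set e (swap D S).
Proof. by case/andP=> Dirr /eqP DIR sSN Yirr; rewrite /IR_set Yirr card_swap // DIR eqxx. Qed.

Lemma IR_adj_swap D S x :
  irredundant e D -> S \subset nonisolated D -> x \in nonisolated D -> x \notin S ->
  IR_set e (swap D S) -> IR_set e (swap D (x |: S)) ->
  IR_adj e (swap D S) (swap D (x |: S)).
Proof.
move=> Dirr sSN xN xS IRS IRxS; apply/and3P; split=> //.
have xD := nonisolated_sub xN.
apply/exists_inP; exists x; first exact: mem_swapD.
apply/exists_inP; exists (priv D x); first by rewrite mem_swap_priv ?setU11.
by rewrite priv_adj // swap_setU1 // eqxx.
Qed.

Lemma IR_set_swap1 D x :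
  IR_set e D -> #|nonisolated D| <= 2 -> x \in nonisolated D -> IR_set e (swap D [set x]).
Proof.
move=> IRD N2 xN; have /andP[Dirr _] := IRD.
have sxN : [set x] \subset nonisolated D by rewrite sub1set.
apply: IR_set_swap => //; apply/independent_irredundant/swap_independent => //.
  by apply: independent_setD_nonisolated; move: N2; rewrite (cardsD1 x) xN.
by rewrite imset_set1 independent_set1.
Qed.

Lemma IR_diam_ge_nonisolated D k :
  IR_set e D -> k < #|nonisolated D| -> IR_diam_ge e k.+1.
Proof.
move=> IRD kN; have /andP[Dirr _] := IRD.
have IRY := IR_set_swap IRD (subxx _) (swap_nonisolated_irredundant Dirr).
exists D, (swap D (nonisolated D)); split=> // /IR_walk_le_card_setD.
by rewrite card_swap_setD // leqNgt kN.
Qed.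

Lemma IR_induced_C4_nonisolated_pair D u v :
  IR_set e D -> u != v -> nonisolated D = [set u; v] -> IR_induced_C4 e.
Proof.
move=> IRD uv NE; have /andP[Dirr _] := IRD.
have N2 : #|nonisolated D| <= 2 by rewrite NE cards2 uv.
have uN : u \in nonisolated D by rewrite NE !inE eqxx.
have vN : v \in nonisolated D by rewrite NE !inE eqxx orbT.
have [uD vD] := (nonisolated_sub uN, nonisolated_sub vN).
have vu : v \notin [set u] by rewrite inE eq_sym.
have uv1 : u \notin [set v] by rewrite inE.
have sub1 x : x \in nonisolated D -> [set x] \subset nonisolated D by rewrite sub1set.
have uvN : [set u; v] \subset nonisolated D by rewrite NE.
have [IRu IRv] := (IR_set_swap1 IRD N2 uN, IR_set_swap1 IRD N2 vN).
have IRuv : IR_set e (swap D [set u; v]).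
  by rewrite -NE; apply: IR_set_swap IRD (subxx _) (swap_nonisolated_irredundant Dirr).
have adj0 x : x \in nonisolated D -> IR_set e (swap D [set x]) -> IR_adj e D (swap D [set x]).
  move=> xN IRx; have := IR_adj_swap Dirr (sub0set _) xN (negbT (in_set0 x)).
  by rewrite setU0 swap_set0; apply.
have adj1 x y : x \in nonisolated D -> y \in nonisolated D -> y \notin [set x] ->
    IR_set e (swap D [set x]) -> IR_set e (swap D [set y; x]) ->
    IR_adj e (swap D [set x]) (swap D [set y; x]).
  by move=> xN yN; apply: IR_adj_swap; rewrite ?sub1.
have uX : u \notin swap D [set u; v] by rewrite notin_swap // !inE eqxx.
have vX : v \notin swap D [set u; v] by rewrite notin_swap // !inE eqxx orbT.
have uDu : u \notin swap D [set u] := notin_swap Dirr (sub1 u uN) (set11 u).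
have vDv : v \notin swap D [set v] := notin_swap Dirr (sub1 v vN) (set11 v).
have puDv : priv D u \notin swap D [set v] := notin_swap_priv Dirr (sub1 v vN) uN uv1.
apply: (@IR_induced_C4I D (swap D [set u]) (swap D [set u; v]) (swap D [set v])).
- exact: adj0.
- by rewrite [[set u; v]]setUC; apply: adj1 => //; rewrite setUC.
- by rewrite IR_adj_sym; apply: adj1.
- by rewrite IR_adj_sym; apply: adj0.
- apply/negP => /(IR_adj_setD_eq (x:=u) (y:=v)) eq_uv; move/eqP: uv; apply.
  by apply: eq_uv; apply/setDP.
- apply/negP => /(IR_adj_setD_eq (x:=v) (y:=priv D u)) eq_vpu.
  have vpu : v = priv D u.
    apply: eq_vpu; apply/setDP; first by rewrite (mem_swapD vD vu).
    by rewrite (mem_swap_priv D (set11 u)).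
  by move: (priv_notin Dirr uN); rewrite -vpu vD.
- by apply: contraTneq uD => ->.
- by apply: contraTneq (mem_swapD uD uv1) => <-.
Qed.

End IRGraph.

Theorem corollary4p2 (T : finType) (e : rel T)
  (esym : symmetric e) (eirr : irreflexive e) :
  (exists D : {set T}, IR_set e D /\ ~~ independent e D) ->
  IR_connected e ->
  IR_induced_C4 e \/ IR_diam_ge e 3.
Proof.
move=> [D [IRD /independentPn[u [v [uD vD euv]]]]] _.
have uN := mem_nonisolated uD vD euv.
have vN : v \in nonisolated e D by apply: mem_nonisolated vD uD _; rewrite esym.
have [N3|N2] := leqP 3 #|nonisolated e D|; first by right; apply: IR_diam_ge_nonisolated IRD N3.
have uv : u != v by apply: contraTneq euv => ->; rewrite eirr.
left; apply: (IR_induced_C4_nonisolated_pair esym eirr IRD uv).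
apply/eqP; rewrite eq_sym eqEcard cards2 uv -ltnS N2 andbT.
by apply/subsetP => x /set2P[]->.
Qed.
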